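(* Let $N\ge1$, $0\le R_+\le N$, and let $u(\vec k),v(\vec k)$ be complex $R_+\times N$ matrices (defined for all $\vec k$ in the Brillouin zone) satisfying $$u(\vec k)u^\dagger(\vec k)-v(\vec k)v^\dagger(\vec k)=\mathbb{1}_{R_+},\qquad u(\vec k)v^T(-\vec k)-v(\vec k)u^T(-\vec k)=0.$$ Consider the bosonic Hamiltonian $H=\sum_{\vec k}\sum_{m=1}^{R_+}A^\dagger_{m,\vec k}A_{m,\vec k}$ with $A_{m,\vec k}=\sum_{n=1}^N(u_{mn}(\vec k)b_{n,\vec k}+v_{mn}(\vec k)b^\dagger_{n,-\vec k})$, and write it (up to an additive constant) as $H=\frac12\sum_{\vec k}\phi_{\vec k}^\dagger h(\vec k)\phi_{\vec k}$ with Hermitian BdG matrix $h(\vec k)$. Let $Q(\vec k)=u^\dagger(\vec k)u(\vec k)$ and let $\tilde h(\vec k)=\mathrm{diag}\big(Q(\vec k),\,Q(-\vec k)^T\big)$ be the BdG matrix of the number-conserving Hamiltonian $\tilde H=\sum_{\vec k}\sum_{m,n}Q_{mn}(\vec k)b^\dagger_{m,\vec k}b_{n,\vec k}$. Then for every $\vec k$, $$\tilde h=\tfrac14\big(h+\tau_z h\tau_z+\tau_z h\tau_z h+h\tau_z h\tau_z\big),$$ where $h=h(\vec k)$ and $\tilde h=\tilde h(\vec k)$.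
   Context: $b_{n,\vec k}$ ($n=1,\dots,N$) are bosonic annihilation operators on sublattice $n$ at momentum $\vec k$ of a lattice with $N$ sites per unit cell and periodic boundary conditions. The Nambu vector is $\phi_{\vec k}=(b_{1,\vec k},\dots,b_{N,\vec k},b^\dagger_{1,-\vec k},\dots,b^\dagger_{N,-\vec k})^T$ and $\tau_z=\mathrm{diag}(\mathbb{1}_N,-\mathbb{1}_N)$. This is the positive-definite (band-flattened) case, in which all modes above the gap are particle-like. *)

(* Complex scalars: any numClosedFieldType C (e.g. algC, R[i]). *)
From HB Require Import structures.
From mathcomp Require Import all_boot all_order all_algebra.
Set Implicit Arguments. Unset Strict Implicit. Unset Printing Implicit Defensive.
Import Order.TTheory GRing.Theory Num.Theory.
Local Open Scope ring_scope.

Definition adjmx (C : numClosedFieldType) (m n : nat) (A : 'M[C]_(m, n)) : 'M[C]_(n, m) :=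
  (map_mx (fun z : C => z^*) A)^T.

Definition tauz (C : numClosedFieldType) (N : nat) : 'M[C]_(N + N) :=
  block_mx 1%:M 0 0 (- 1%:M).
Definition taux (C : numClosedFieldType) (N : nat) : 'M[C]_(N + N) :=
  block_mx 0 1%:M 1%:M 0.

(* Momenta: an abelian group K (Brillouin zone of the periodic lattice), -k is negation.
   u, v : K -> complex R_+ x N matrices. *)

(* Coefficient matrix of sum_m A^dag_{m,k} A_{m,k} written as phi_k^dag M(k) phi_k,
   phi_k = (b_k, b^dag_{-k}). *)
Definition Mcoef (C : numClosedFieldType) (K : zmodType) (r N : nat)
  (u v : K -> 'M[C]_(r, N)) (k : K) : 'M[C]_(N + N) :=
  block_mx (adjmx (u k) *m u k) (adjmx (u k) *m v k)
           (adjmx (v k) *m u k) (adjmx (v k) *m v k).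

(* Hermitian BdG matrix: H = sum_k phi^dag M(k) phi = 1/2 sum_k phi^dag h(k) phi + const,
   using phi_{-k} = tau_x (phi_k^dag)^T, so h(k) = M(k) + tau_x M(-k)^T tau_x. *)
Definition hBdG (C : numClosedFieldType) (K : zmodType) (r N : nat)
  (u v : K -> 'M[C]_(r, N)) (k : K) : 'M[C]_(N + N) :=
  Mcoef u v k + taux C N *m (Mcoef u v (- k))^T *m taux C N.

Definition Qmat (C : numClosedFieldType) (K : zmodType) (r N : nat)
  (u : K -> 'M[C]_(r, N)) (k : K) : 'M[C]_N := adjmx (u k) *m u k.

Definition htilde (C : numClosedFieldType) (K : zmodType) (r N : nat)
  (u : K -> 'M[C]_(r, N)) (k : K) : 'M[C]_(N + N) :=
  block_mx (Qmat u k) 0 0 (Qmat u (- k))^T.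

From HB Require Import structures.
From mathcomp Require Import all_boot all_order all_algebra.
Set Implicit Arguments.
Unset Strict Implicit.
Unset Printing Implicit Defensive.

Import Order.TTheory GRing.Theory Num.Theory.
Local Open Scope ring_scope.

(* Write h = W^dag W with the Bogoliubov matrix W = [[u(k), v(k)], [conj v(-k), conj u(-k)]].
   The two constraints on u and v say exactly that W is paraunitary, W tau_z W^dag = tau_z.
   Hence tau_z h tau_z h = tau_z W^dag tau_z W and h tau_z h tau_z = W^dag tau_z W tau_z, so
   the symmetrized sum factors as X^dag X with X = W + tau_z W tau_z.  Conjugating by tau_z
   flips the sign of the anomalous blocks, so X = 2 diag(u(k), conj u(-k)) and X^dag X / 4 is
   exactly diag(Q(k), Q(-k)^T). *)

Local Notation "A ^c" := (map_mx Num.conj A).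

Lemma tau_symmetrized_gram (R : pzRingType) (m n : nat)
    (W : 'M[R]_(m, n)) (Wa : 'M[R]_(n, m)) (s : 'M[R]_m) (t : 'M[R]_n) :
  s *m s = 1%:M -> W *m t *m Wa = s ->
  let h := Wa *m W in
  h + t *m h *m t + t *m h *m t *m h + h *m t *m h *m t =
    (Wa + t *m Wa *m s) *m (W + s *m W *m t).
Proof.
move=> ss1 WtWa h.
have -> : t *m h *m t *m h = t *m Wa *m s *m W by rewrite -WtWa /h !mulmxA.
have -> : h *m t *m h *m t = Wa *m s *m W *m t by rewrite -WtWa /h !mulmxA.
rewrite mulmxDl !mulmxDr /h !mulmxA -[t *m Wa *m s *m s](mulmxA _ s) ss1 mulmx1.
by rewrite -!addrA; congr (_ + _); rewrite [LHS]addrC -[LHS]addrA [LHS]addrCA.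
Qed.

Lemma mulmx_mulrn (R : comPzRingType) m n p (A : 'M[R]_(m, n)) (B : 'M[R]_(n, p)) i j :
  (A *+ i) *m (B *+ j) = (A *m B) *+ (i * j).
Proof. by rewrite -!scaler_nat -scalemxAl -scalemxAr scalerA -natrM mulnC. Qed.

Section Adjoint.
Variable C : numClosedFieldType.

Lemma adjmxM m n p (A : 'M[C]_(m, n)) (B : 'M[C]_(n, p)) :
  adjmx (A *m B) = adjmx B *m adjmx A.
Proof. by rewrite /adjmx (map_mxM Num.conj) trmx_mul. Qed.

Lemma adjmxD m n (A B : 'M[C]_(m, n)) : adjmx (A + B) = adjmx A + adjmx B.
Proof. by rewrite /adjmx (map_mxD Num.conj) linearD. Qed.

Lemma adjmx_block m1 m2 n1 n2 (a : 'M[C]_(m1, n1)) (b : 'M[C]_(m1, n2))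
    (c : 'M[C]_(m2, n1)) (d : 'M[C]_(m2, n2)) :
  adjmx (block_mx a b c d) = block_mx (adjmx a) (adjmx c) (adjmx b) (adjmx d).
Proof. by rewrite /adjmx map_block_mx tr_block_mx. Qed.

Lemma adjmx0 m n : adjmx (0 : 'M[C]_(m, n)) = 0.
Proof. by rewrite /adjmx map_mx0 trmx0. Qed.

Lemma adjmxMn m n (A : 'M[C]_(m, n)) k : adjmx (A *+ k) = adjmx A *+ k.
Proof.
elim: k => [|k IHk]; first by rewrite !mulr0n adjmx0.
by rewrite !mulrS adjmxD IHk.
Qed.

Lemma adjmx_conj m n (A : 'M[C]_(m, n)) : adjmx A^c = A^T.
Proof. by apply/matrixP=> i j; rewrite !mxE conjCK. Qed.

Lemma conj_adjmx m n (A : 'M[C]_(m, n)) : (adjmx A)^c = A^T.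
Proof. by apply/matrixP=> i j; rewrite !mxE conjCK. Qed.

Lemma tr_adjmx m n (A : 'M[C]_(m, n)) : (adjmx A)^T = A^c.
Proof. exact: trmxK. Qed.

Lemma adjmx_scalar n (a : C) : adjmx (a%:M : 'M_n) = a^*%:M.
Proof. by rewrite /adjmx map_scalar_mx tr_scalar_mx. Qed.

Lemma adjmx_tauz n : adjmx (tauz C n) = tauz C n.
Proof.
rewrite /tauz adjmx_block adjmx0 -scaleN1r !scale_scalar_mx !adjmx_scalar.
by rewrite mulr1 rmorphN1 conjC1.
Qed.

Lemma tauzK n : tauz C n *m tauz C n = 1%:M.
Proof.
rewrite /tauz mulmx_block !(mulmx0, mul0mx, mulmx1, addr0, add0r).
by rewrite mulmxN mulNmx opprK mulmx1 -scalar_mx_block.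
Qed.

Lemma adjmx_tauz_conj m n (A : 'M[C]_(m + m, n + n)) :
  adjmx (tauz C m *m A *m tauz C n) = tauz C n *m adjmx A *m tauz C m.
Proof. by rewrite !adjmxM !adjmx_tauz mulmxA. Qed.

End Adjoint.

Section Bogoliubov.
Variables (C : numClosedFieldType) (K : zmodType) (r N : nat) (u v : K -> 'M[C]_(r, N)).

Definition bogoliubov_mx (k : K) : 'M[C]_(r + r, N + N) :=
  block_mx (u k) (v k) (v (- k))^c (u (- k))^c.

Lemma hBdG_gram k : hBdG u v k = adjmx (bogoliubov_mx k) *m bogoliubov_mx k.
Proof.
rewrite /hBdG /Mcoef /taux /bogoliubov_mx tr_block_mx !mulmx_block adjmx_block !adjmx_conj.
rewrite !(mul0mx, mul1mx, mulmx0, mulmx1, add0r, addr0) add_block_mx !trmx_mul !tr_adjmx.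
by rewrite mulmx_block.
Qed.

Hypothesis hnorm : forall k, u k *m adjmx (u k) - v k *m adjmx (v k) = 1%:M.
Hypothesis hcomm : forall k, u k *m (v (- k))^T - v k *m (u (- k))^T = 0.

Lemma bogoliubov_pseudo_unitary k :
  bogoliubov_mx k *m tauz C N *m adjmx (bogoliubov_mx k) = tauz C r.
Proof.
rewrite /tauz /bogoliubov_mx !mulmx_block adjmx_block !adjmx_conj.
rewrite !(mul0mx, mulmx1, mulmx0, add0r, addr0, mulmxN, mulNmx) mulmx_block.
rewrite !(mulmx1, mulNmx, mulmxN) hnorm hcomm.
have hcomm_conj : (v (- k))^c *m adjmx (u k) - (u (- k))^c *m adjmx (v k) = 0.
  rewrite /adjmx !map_trmx -!(map_mxM Num.conj) -(map_mxB Num.conj).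
  have := hcomm (- k); rewrite opprK => hcomm_k.
  by rewrite -opprB hcomm_k oppr0 map_mx0.
have hnorm_conj : (v (- k))^c *m (v (- k))^T - (u (- k))^c *m (u (- k))^T = - 1%:M.
  rewrite -!conj_adjmx -!(map_mxM Num.conj) -(map_mxB Num.conj) -opprB hnorm.
  by rewrite map_mxN map_scalar_mx rmorph1.
by rewrite hcomm_conj hnorm_conj.
Qed.

Definition particle_block (k : K) : 'M[C]_(r + r, N + N) :=
  block_mx (u k) 0 0 (u (- k))^c.

Lemma bogoliubov_tauz_sym k :
  bogoliubov_mx k + tauz C r *m bogoliubov_mx k *m tauz C N = particle_block k *+ 2.
Proof.
rewrite /tauz /bogoliubov_mx /particle_block !mulmx_block.
rewrite !(mul0mx, mul1mx, mulmx0, mulmx1, add0r, addr0, mulNmx, mulmxN, mul1mx, opprK).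
by rewrite add_block_mx !subrr mulr2n add_block_mx addr0.
Qed.

Lemma htilde_gram k : htilde u k = adjmx (particle_block k) *m particle_block k.
Proof.
rewrite /htilde /Qmat /particle_block adjmx_block !adjmx0 adjmx_conj mulmx_block.
by rewrite !(mul0mx, mulmx0, add0r, addr0) trmx_mul tr_adjmx.
Qed.

End Bogoliubov.

Theorem mainTheorem3 (C : numClosedFieldType) (K : zmodType) (N r : nat)
  (hN : (1 <= N)%N) (hr : (r <= N)%N)
  (u v : K -> 'M[C]_(r, N))
  (hnorm : forall k : K, u k *m adjmx (u k) - v k *m adjmx (v k) = 1%:M)
  (hcomm : forall k : K, u k *m (v (- k))^T - v k *m (u (- k))^T = 0)
  (k : K) :
  let h := hBdG u v k in
  let tz := tauz C N in
  htilde u k =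
    4^-1 *: (h + tz *m h *m tz + tz *m h *m tz *m h + h *m tz *m h *m tz).
Proof.
move=> h tz; rewrite /h hBdG_gram.
rewrite (tau_symmetrized_gram (tauzK C r) (bogoliubov_pseudo_unitary hnorm hcomm k)).
rewrite -adjmx_tauz_conj -adjmxD bogoliubov_tauz_sym htilde_gram.
rewrite adjmxMn mulmx_mulrn -scaler_nat scalerA mulVf ?scale1r //.
by rewrite pnatr_eq0.
Qed.
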